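(* Let $n\ge2$ be an integer and $\lambda>0$, and let $\gamma(t)=(\omega(t),x(t),y(t))$ be a solution with $\omega>0$ of the system $$\frac{d\omega}{dt}=x\omega,\qquad \frac{dx}{dt}=x^2-xy+n-1-\lambda\omega^2,\qquad \frac{dy}{dt}=xy-nx^2-\lambda\omega^2,$$ defined on the maximal interval $(S,\infty)$, such that $\int_{t_0}^\infty\omega(\sigma)\,d\sigma=\infty$ for every $t_0\in(S,\infty)$ and $-1<x(t)<1$ for all $t\in(S,\infty)$. Then $\lim_{t\to\infty}y(t)=-\infty$. *)

From Stdlib Require Import Reals.
From Coquelicot Require Import Coquelicot.
Open Scope R_scope.

Definition is_sol (n : nat) (lam : R) (S : Rbar) (w x y : R -> R) : Prop :=
  forall t : R, Rbar_lt S t ->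
    is_derive w t (x t * w t) /\
    is_derive x t (x t ^ 2 - x t * y t + INR n - 1 - lam * w t ^ 2) /\
    is_derive y t (x t * y t - INR n * x t ^ 2 - lam * w t ^ 2).

Definition maximal_sol (n : nat) (lam : R) (S : Rbar) (w x y : R -> R) : Prop :=
  is_sol n lam S w x y /\
  forall (S' : Rbar) (w' x' y' : R -> R),
    Rbar_lt S' S -> is_sol n lam S' w' x' y' ->
    (forall t : R, Rbar_lt S t -> w' t = w t /\ x' t = x t /\ y' t = y t) ->
    False.

Definition integral_diverges (w : R -> R) (t0 : R) : Prop :=
  forall M : R, exists T : R, t0 <= T /\ M < RInt w t0 T.

From Stdlib Require Import Reals Lra Psatz Lia.
From Coquelicot Require Import Coquelicot.
Open Scope R_scope.

(* Along the solution, z = y / w satisfies z' = - (n x^2 / w + lam w) <= - lam w, so z -> -oo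
   because the integral of w diverges; moreover (y - x - (n - 1)) / w^2 is nonincreasing.
   If y(T) >= -M at some late time T, then w(T) = y(T) / z(T) is tiny, so this ratio is
   <= -2 lam at T, hence afterwards: y < 0 and y - x - (n - 1) <= -2 lam w^2.  Then x' >= 1/2
   whenever x >= 1/2, and since x < 1 this keeps x < 1/2.  With k = 4 / (n - 1), the function
   exp(k (x + y) - 2t) / w^2 - lam k e^2 e^(-2t) is then nondecreasing and positive at T, which
   yields w(t) = O(e^(-t)) and contradicts the divergence of the integral of w. *)

Lemma Rbar_lt_Rle_trans (S : Rbar) (a t : R) : Rbar_lt S a -> a <= t -> Rbar_lt S t.
Proof. intros Ha Hat; exact (Rbar_lt_le_trans S a t Ha Hat). Qed.

Lemma le_of_derive_ge (f df : R -> R) (a b m : R) :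
  a <= b -> (forall t, a <= t <= b -> is_derive f t (df t)) ->
  (forall t, a <= t <= b -> m <= df t) -> f a + m * (b - a) <= f b.
Proof.
  intros Hab Hd Hm.
  destruct (MVT_gen f a b df) as (c & Hc & Hfc);
    rewrite ?Rmin_left, ?Rmax_right in * by lra.
  - intros t Ht; apply Hd; lra.
  - intros t Ht; apply continuity_pt_filterlim, (ex_derive_continuous f).
    exists (df t); apply Hd; lra.
  - specialize (Hm c Hc); nra.
Qed.

Lemma le_of_derive_nonpos (f df : R -> R) (a b : R) :
  a <= b -> (forall t, a <= t <= b -> is_derive f t (df t)) ->
  (forall t, a <= t <= b -> df t <= 0) -> f b <= f a.
Proof.
  intros Hab Hd Hneg.
  enough (- f a + 0 * (b - a) <= - f b) by lra.
  apply (le_of_derive_ge (fun t => - f t) (fun t => - df t)); auto.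
  - intros t Ht; apply (is_derive_opp f), Hd, Ht.
  - intros t Ht; specialize (Hneg t Ht); lra.
Qed.

Lemma is_derive_pos_increasing_right (f : R -> R) (t l : R) :
  is_derive f t l -> 0 < l -> exists d, 0 < d /\ forall h, 0 < h < d -> f t < f (t + h).
Proof.
  intros Hd Hl.
  destruct (proj1 (is_derive_Reals f t l) Hd (l / 2)) as [d Hq]; [lra |].
  exists d; split; [apply cond_pos |]; intros h Hh.
  specialize (Hq h ltac:(lra) ltac:(rewrite Rabs_right; lra)).
  apply Rabs_def2 in Hq.
  assert (E : f (t + h) - f t = (f (t + h) - f t) / h * h) by (field; lra).
  nra.
Qed.

Lemma derive_pos_barrier (f df : R -> R) (a b c : R) :
  (forall t, a <= t <= b -> is_derive f t (df t)) ->
  (forall t, a <= t <= b -> c <= f t -> 0 < df t) ->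
  c <= f a -> forall t, a <= t <= b -> c <= f t.
Proof.
  intros Hd Hpos Ha t1 Ht1.
  apply Rnot_lt_le; intro Ht1c.
  (* m = last time in [a, t1] where f >= c: f m >= c by continuity, and f' m > 0 then pushes
     f above c just after m. *)
  destruct (completeness (fun r => a <= r <= t1 /\ c <= f r)) as (m & Hub & Hlub).
  { exists t1; intros r Hr; apply Hr. }
  { exists a; split; [lra | exact Ha]. }
  assert (Ham : a <= m) by (apply Hub; split; [lra | exact Ha]).
  assert (Hmt : m <= t1) by (apply Hlub; intros r Hr; apply Hr).
  assert (Hdm : is_derive f m (df m)) by (apply Hd; lra).
  assert (Hcm : c <= f m).
  { apply Rnot_lt_le; intro Hfm.
    assert (Hnear : locally m (fun u => f u < c))
      by exact (ex_derive_continuous f m (ex_intro _ _ Hdm) _ (open_lt c (f m) Hfm)).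
    destruct Hnear as [d Hd'].
    enough (m <= m - d) by (destruct d; simpl in *; lra).
    apply Hlub; intros r [Hr Hfr].
    apply Rnot_lt_le; intro Hrd.
    assert (r <= m) by (apply Hub; split; assumption).
    enough (f r < c) by lra.
    apply Hd'; change (Rabs (r - m) < d); rewrite Rabs_left1; lra. }
  destruct (is_derive_pos_increasing_right f m (df m) Hdm) as (d & Hd0 & Hinc);
    [apply Hpos; lra |].
  assert (Hmt' : m < t1) by (destruct (Req_dec m t1); subst; lra).
  set (h := Rmin (d / 2) (t1 - m)).
  assert (Hh : 0 < h <= t1 - m /\ h < d).
  { pose proof (Rmin_l (d / 2) (t1 - m)); pose proof (Rmin_r (d / 2) (t1 - m)).
    unfold h; repeat split; [apply Rmin_glb_lt | |]; lra. }
  enough (m + h <= m) by lra.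
  apply Hub; split; [lra |].
  specialize (Hinc h ltac:(lra)); lra.
Qed.

Lemma is_derive_RInt_Rbar (h : R -> R) (S : Rbar) (a t : R) :
  (forall s : R, Rbar_lt S s -> continuous h s) -> Rbar_lt S a -> Rbar_lt S t ->
  is_derive (fun u => RInt h a u) t (h t).
Proof.
  intros Hc Ha Ht.
  apply (is_derive_RInt h (RInt h a) a t); [| exact (Hc t Ht)].
  apply (filter_imp (fun u : R => Rbar_lt S u)); [| exact (open_Rbar_gt S t Ht)].
  intros u Hu; apply (RInt_correct (V := R_CompleteNormedModule)), ex_RInt_continuous.
  intros s Hs; apply Hc.
  apply (Rbar_lt_le_trans S (Rmin a u) s); [| exact (proj1 Hs)].
  apply Rmin_case; assumption.
Qed.

Lemma RInt_le_of_derive_le_opp (f df h : R -> R) (S : Rbar) (a b : R) :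
  (forall s : R, Rbar_lt S s -> continuous h s) -> Rbar_lt S a -> a <= b ->
  (forall t, a <= t <= b -> is_derive f t (df t)) ->
  (forall t, a <= t <= b -> df t <= - h t) -> RInt h a b <= f a - f b.
Proof.
  intros Hc Ha Hab Hd Hle.
  assert (H0 : RInt h a a = 0) by exact (RInt_point (V := R_CompleteNormedModule) a h).
  enough (f b + RInt h a b <= f a + RInt h a a) by lra.
  apply (le_of_derive_nonpos (fun t => f t + RInt h a t) (fun t => df t + h t) a b Hab).
  - intros t Ht.
    apply (is_derive_plus f (fun u => RInt h a u)); [apply Hd, Ht |].
    apply (is_derive_RInt_Rbar h S); [exact Hc | exact Ha |].
    exact (Rbar_lt_Rle_trans S a t Ha (proj1 Ht)).
  - intros t Ht; specialize (Hle t Ht); lra.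
Qed.

Lemma RInt_le_of_exp_bound (h : R -> R) (S : Rbar) (T T' B : R) :
  (forall s : R, Rbar_lt S s -> continuous h s) -> Rbar_lt S T -> T <= T' -> 0 <= B ->
  (forall t, T <= t -> h t <= B * exp (- t)) -> RInt h T T' <= B * exp (- T).
Proof.
  intros Hc HT HTT' HB Hh.
  assert (RInt h T T' <= B * exp (- T) - B * exp (- T')).
  { apply (RInt_le_of_derive_le_opp (fun t => B * exp (- t)) (fun t => - B * exp (- t)) h S T T'
             Hc HT HTT').
    - intros t _; auto_derive; [exact I | ring].
    - intros t Ht; specialize (Hh t (proj1 Ht)); lra. }
  pose proof (exp_pos (- T')); nra.
Qed.

Lemma maximal_sol_nonempty (n : nat) (lam : R) (S : Rbar) (w x y : R -> R) :
  (1 <= n)%nat -> 0 < lam -> maximal_sol n lam S w x y -> exists t : R, Rbar_lt S t.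
Proof.
  intros Hn Hlam [_ Hmax].
  destruct S as [s | | ].
  - exists (s + 1); simpl; lra.
  - (* (+oo, +oo) is empty, and the steady state w = sqrt ((n - 1) / lam), x = 0,
       y = - (n - 1) t extends the solution to (-oo, +oo). *)
    exfalso.
    assert (Hn1 : 0 <= INR n - 1) by (apply le_INR in Hn; simpl in Hn; lra).
    set (w0 := sqrt ((INR n - 1) / lam)).
    assert (Hw0 : w0 ^ 2 = (INR n - 1) / lam).
    { unfold w0; rewrite <- Rsqr_pow2; apply Rsqr_sqrt, Rdiv_le_0_compat; lra. }
    apply (Hmax m_infty (fun _ => w0) (fun _ => 0) (fun t => - (INR n - 1) * t)).
    + exact I.
    + intros t _; split; [| split]; auto_derive; auto; rewrite ?Hw0; field; lra.
    + intros t Ht; destruct Ht.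
  - exists 0; exact I.
Qed.

Section Solution.

Variables (n : nat) (lam : R) (S : Rbar) (w x y : R -> R).
Hypothesis n_ge2 : (2 <= n)%nat.
Hypothesis lam_gt0 : 0 < lam.
Hypothesis sol : is_sol n lam S w x y.
Hypothesis w_gt0 : forall t : R, Rbar_lt S t -> 0 < w t.
Hypothesis x_bound : forall t : R, Rbar_lt S t -> -1 < x t < 1.

Lemma INR_n_ge2 : 2 <= INR n.
Proof. apply le_INR in n_ge2; simpl in n_ge2; lra. Qed.

Local Ltac auto_derive_sol t Ht :=
  let Dw := fresh "Dw" in let Dx := fresh "Dx" in let Dy := fresh "Dy" in
  destruct (sol t Ht) as (Dw & Dx & Dy);
  auto_derive;
  [ repeat match goal with |- _ /\ _ => split end;
    try (eexists; eassumption); try exact I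
  | rewrite ?(is_derive_unique (fun u : R => w u) t _ Dw),
      ?(is_derive_unique (fun u : R => x u) t _ Dx),
      ?(is_derive_unique (fun u : R => y u) t _ Dy) ].

Lemma continuous_w (t : R) : Rbar_lt S t -> continuous w t.
Proof. intro Ht; apply (ex_derive_continuous w); exists (x t * w t); apply (sol t Ht). Qed.

Lemma is_derive_y_div_w (t : R) : Rbar_lt S t ->
  is_derive (fun u => y u / w u) t (- (INR n * x t ^ 2 / w t + lam * w t)).
Proof. intro Ht; pose proof (w_gt0 t Ht); auto_derive_sol t Ht; [lra | field; lra]. Qed.

Lemma y_div_w_nonincreasing (a b : R) : Rbar_lt S a -> a <= b -> y b / w b <= y a / w a.
Proof.
  intros Ha Hab.
  apply (le_of_derive_nonpos (fun t => y t / w t)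
           (fun t => - (INR n * x t ^ 2 / w t + lam * w t)) a b Hab).
  - intros t Ht; apply is_derive_y_div_w, (Rbar_lt_Rle_trans S a t Ha (proj1 Ht)).
  - intros t Ht; pose proof (w_gt0 t (Rbar_lt_Rle_trans S a t Ha (proj1 Ht))).
    assert (0 <= INR n * x t ^ 2 / w t)
      by (apply Rdiv_le_0_compat; [pose proof (pos_INR n); nra | lra]).
    nra.
Qed.

Lemma y_div_w_decrease (a b : R) : Rbar_lt S a -> a <= b ->
  lam * RInt w a b <= y a / w a - y b / w b.
Proof.
  intros Ha Hab.
  set (za := y a / w a); set (zb := y b / w b).
  enough (RInt w a b <= / lam * za - / lam * zb).
  { replace (za - zb) with (lam * (/ lam * za - / lam * zb)) by (field; lra).
    apply Rmult_le_compat_l; lra. }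
  apply (RInt_le_of_derive_le_opp (fun t => / lam * (y t / w t))
           (fun t => - / lam * (INR n * x t ^ 2 / w t) - w t) w S a b continuous_w Ha Hab).
  - intros t Ht; pose proof (w_gt0 t (Rbar_lt_Rle_trans S a t Ha (proj1 Ht))).
    auto_derive_sol t (Rbar_lt_Rle_trans S a t Ha (proj1 Ht)); [lra | field; lra].
  - intros t Ht; pose proof (w_gt0 t (Rbar_lt_Rle_trans S a t Ha (proj1 Ht))).
    assert (0 <= / lam * (INR n * x t ^ 2 / w t)).
    { apply Rmult_le_pos; [left; apply Rinv_0_lt_compat; lra |].
      apply Rdiv_le_0_compat; [pose proof (pos_INR n); nra | lra]. }
    lra.
Qed.

Lemma y_div_w_eventually_le (K t0 : R) : Rbar_lt S t0 -> integral_diverges w t0 ->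
  exists T : R, Rbar_lt S T /\ forall t, T <= t -> y t / w t <= K.
Proof.
  intros Ht0 Hdiv.
  set (z0 := y t0 / w t0).
  destruct (Hdiv ((z0 - K) / lam)) as (T & HT & HI).
  pose proof (Rbar_lt_Rle_trans S t0 T Ht0 HT) as HST.
  exists T; split; [exact HST |]; intros t Ht.
  pose proof (y_div_w_nonincreasing T t HST Ht).
  pose proof (y_div_w_decrease t0 T Ht0 HT).
  apply (Rmult_lt_compat_l lam) in HI; [| lra].
  replace (lam * ((z0 - K) / lam)) with (z0 - K) in HI by (field; lra).
  unfold z0 in HI; lra.
Qed.

Lemma y_sub_x_ratio_nonincreasing (a b : R) : Rbar_lt S a -> a <= b ->
  (y b - x b - (INR n - 1)) / w b ^ 2 <= (y a - x a - (INR n - 1)) / w a ^ 2.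
Proof.
  intros Ha Hab.
  apply (le_of_derive_nonpos (fun t => (y t - x t - (INR n - 1)) / w t ^ 2)
           (fun t => - ((INR n - 1) * (1 - x t) ^ 2 / w t ^ 2)) a b Hab).
  - intros t Ht; pose proof (w_gt0 t (Rbar_lt_Rle_trans S a t Ha (proj1 Ht))).
    auto_derive_sol t (Rbar_lt_Rle_trans S a t Ha (proj1 Ht)); [nra | field; lra].
  - intros t Ht; pose proof (w_gt0 t (Rbar_lt_Rle_trans S a t Ha (proj1 Ht))).
    assert (0 <= (INR n - 1) * (1 - x t) ^ 2 / w t ^ 2).
    { apply Rdiv_le_0_compat; [| nra].
      apply Rmult_le_pos; [pose proof INR_n_ge2; lra | apply pow2_ge_0]. }
    lra.
Qed.

Lemma trapped_after (T : R) : Rbar_lt S T -> w T <= 1 ->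
  (forall t, T <= t -> y t / w t <= - 2 * lam) ->
  forall t, T <= t -> y t < 0 /\ y t - x t - (INR n - 1) <= - 2 * lam * w t ^ 2.
Proof.
  intros HT HwT Hz.
  assert (Hy : forall t, T <= t -> y t <= - 2 * lam * w t).
  { intros t Ht; apply Rle_div_l; [| apply Hz, Ht].
    apply Rlt_gt, w_gt0, (Rbar_lt_Rle_trans S T t HT Ht). }
  assert (HrT : (y T - x T - (INR n - 1)) / w T ^ 2 <= - 2 * lam).
  { pose proof (w_gt0 T HT); pose proof (x_bound T HT); pose proof INR_n_ge2.
    pose proof (Hy T (Rle_refl T)).
    assert (0 <= lam * w T * (1 - w T)) by (apply Rmult_le_pos; nra).
    apply Rle_div_l; nra. }
  intros t Ht; pose proof (w_gt0 t (Rbar_lt_Rle_trans S T t HT Ht)).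
  pose proof (Hy t Ht); split; [nra |].
  apply Rle_div_l; [nra |].
  exact (Rle_trans _ _ _ (y_sub_x_ratio_nonincreasing T t HT Ht) HrT).
Qed.

Lemma x_lt_half (T : R) : Rbar_lt S T ->
  (forall t, T <= t -> y t < 0 /\ y t - x t - (INR n - 1) <= - 2 * lam * w t ^ 2) ->
  forall t, T <= t -> x t < 1 / 2.
Proof.
  intros HT Htrap s Hs.
  set (dx t := x t ^ 2 - x t * y t + INR n - 1 - lam * w t ^ 2).
  assert (Hdx : forall t, T <= t -> 1 / 2 <= x t -> 1 / 2 <= dx t).
  { intros t Ht Hxt; unfold dx.
    destruct (Htrap t Ht); pose proof INR_n_ge2.
    assert (0 <= (x t - 1 / 2) * (x t - y t)) by (apply Rmult_le_pos; lra).
    nra. }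
  assert (Hd : forall t, s <= t <= s + 1 -> is_derive x t (dx t))
    by (intros t Ht; exact (proj1 (proj2 (sol t (Rbar_lt_Rle_trans S T t HT ltac:(lra)))))).
  apply Rnot_le_lt; intro Hxs.
  assert (Hhalf : forall t, s <= t <= s + 1 -> 1 / 2 <= x t).
  { apply (derive_pos_barrier x dx s (s + 1) (1 / 2) Hd); [| exact Hxs].
    intros t Ht Hxt; specialize (Hdx t ltac:(lra) Hxt); lra. }
  assert (Hinc : x s + 1 / 2 * (s + 1 - s) <= x (s + 1)).
  { apply (le_of_derive_ge x dx s (s + 1) (1 / 2)); [lra | exact Hd |].
    intros t Ht; apply Hdx, Hhalf; lra. }
  pose proof (x_bound (s + 1) (Rbar_lt_Rle_trans S T (s + 1) HT ltac:(lra))).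
  lra.
Qed.

(* [k (n - 1) = 4] turns [k (x' + y')] into [4 (1 - x ^ 2) - 2 lam k w ^ 2], which produces the
   factor [(1 - 2 x) (1 + x)] of [dlyap]. *)
Let k := 4 / (INR n - 1).

Lemma k_bounds : 0 < k <= 4.
Proof.
  pose proof INR_n_ge2; unfold k; split.
  - apply Rdiv_lt_0_compat; lra.
  - apply Rle_div_l; lra.
Qed.

Definition lyap (t : R) : R :=
  exp (k * (x t + y t) - 2 * t) / w t ^ 2 - lam * k * exp 2 * exp (- 2 * t).

Definition dlyap (t : R) : R :=
  2 * (1 - 2 * x t) * (1 + x t) * exp (k * (x t + y t) - 2 * t) / w t ^ 2
  + 2 * lam * k * (exp 2 * exp (- 2 * t) - exp (k * (x t + y t) - 2 * t)).

Lemma is_derive_lyap (t : R) : Rbar_lt S t -> is_derive lyap t (dlyap t).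
Proof.
  intro Ht; pose proof (w_gt0 t Ht); pose proof INR_n_ge2.
  unfold lyap, dlyap, k; auto_derive_sol t Ht; [nra | unfold Rminus; field; lra].
Qed.

Lemma exp_kxy_le (t : R) : x t < 1 / 2 -> y t < 0 ->
  exp (k * (x t + y t) - 2 * t) <= exp 2 * exp (- 2 * t).
Proof.
  intros Hx Hy; pose proof k_bounds.
  rewrite <- exp_plus; apply Rlt_le, exp_increasing; nra.
Qed.

Lemma dlyap_nonneg (t : R) : Rbar_lt S t -> x t < 1 / 2 -> y t < 0 -> 0 <= dlyap t.
Proof.
  intros Ht Hx Hy; unfold dlyap.
  pose proof (w_gt0 t Ht); pose proof (x_bound t Ht); pose proof k_bounds.
  pose proof (exp_kxy_le t Hx Hy); pose proof (exp_pos (k * (x t + y t) - 2 * t)).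
  assert (0 <= 2 * (1 - 2 * x t) * (1 + x t) * exp (k * (x t + y t) - 2 * t) / w t ^ 2).
  { apply Rdiv_le_0_compat; [| nra].
    apply Rmult_le_pos; [apply Rmult_le_pos |]; lra. }
  assert (0 <= 2 * lam * k * (exp 2 * exp (- 2 * t) - exp (k * (x t + y t) - 2 * t))).
  { apply Rmult_le_pos; [| lra]. apply Rmult_le_pos; lra. }
  lra.
Qed.

Lemma lyap_nondecreasing (T t : R) : Rbar_lt S T ->
  (forall s, T <= s -> x s < 1 / 2 /\ y s < 0) -> T <= t -> lyap T <= lyap t.
Proof.
  intros HT Hxy Ht.
  enough (lyap T + 0 * (t - T) <= lyap t) by lra.
  apply (le_of_derive_ge lyap dlyap T t 0 Ht).
  - intros s Hs; apply is_derive_lyap, (Rbar_lt_Rle_trans S T s HT (proj1 Hs)).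
  - intros s Hs; destruct (Hxy s (proj1 Hs)).
    apply dlyap_nonneg; [apply (Rbar_lt_Rle_trans S T s HT (proj1 Hs)) | |]; assumption.
Qed.

Lemma lyap_pos (T M : R) : Rbar_lt S T -> - M <= y T ->
  2 * lam * k * exp 2 * w T ^ 2 <= exp (- k * (1 + M)) -> 0 < lyap T.
Proof.
  intros HT HyT Hsmall; unfold lyap.
  pose proof (w_gt0 T HT); pose proof (x_bound T HT); pose proof k_bounds.
  set (c := lam * k * exp 2); set (u := exp (- 2 * T)).
  assert (Hc : 0 < c) by (unfold c; pose proof (exp_pos 2); apply Rmult_lt_0_compat; nra).
  assert (Hu : 0 < u) by apply exp_pos.
  assert (HE : exp (- k * (1 + M)) * u < exp (k * (x T + y T) - 2 * T)).
  { unfold u; rewrite <- exp_plus; apply exp_increasing; nra. }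
  assert (Hsmall' : 2 * c * w T ^ 2 <= exp (- k * (1 + M))) by (unfold c; lra).
  clearbody c u.
  enough (c * u < exp (k * (x T + y T) - 2 * T) / w T ^ 2) by lra.
  apply (Rlt_div_r (c * u)); [nra |].
  assert (2 * c * w T ^ 2 * u <= exp (- k * (1 + M)) * u)
    by (apply Rmult_le_compat_r; lra).
  assert (0 < c * u * w T ^ 2) by (apply Rmult_lt_0_compat; [nra | apply pow_lt; lra]).
  lra.
Qed.

Lemma w_le_exp_of_lyap (T t : R) : Rbar_lt S T -> 0 < lyap T ->
  (forall s, T <= s -> x s < 1 / 2 /\ y s < 0) -> T <= t ->
  w t <= sqrt (exp 2 / lyap T) * exp (- t).
Proof.
  intros HT HL Hxy Ht.
  pose proof (w_gt0 t (Rbar_lt_Rle_trans S T t HT Ht)); pose proof k_bounds.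
  destruct (Hxy t Ht) as [Hx Hy].
  pose proof (lyap_nondecreasing T t HT Hxy Ht) as Hmono; unfold lyap at 2 in Hmono.
  assert (Hcorr : 0 <= lam * k * exp 2 * exp (- 2 * t)).
  { pose proof (exp_pos 2); pose proof (exp_pos (- 2 * t)).
    apply Rmult_le_pos; [apply Rmult_le_pos |]; nra. }
  assert (Hw2 : lyap T * w t ^ 2 <= exp 2 * exp (- 2 * t)).
  { apply Rle_trans with (exp (k * (x t + y t) - 2 * t)); [| apply exp_kxy_le; assumption].
    apply Rle_div_r; [nra | lra]. }
  apply Rsqr_incr_0_var.
  - unfold Rsqr.
    replace (sqrt (exp 2 / lyap T) * exp (- t) * (sqrt (exp 2 / lyap T) * exp (- t)))
      with (sqrt (exp 2 / lyap T) * sqrt (exp 2 / lyap T) * exp (- 2 * t))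
      by (replace (- 2 * t) with (- t + - t) by ring; rewrite exp_plus; ring).
    rewrite sqrt_sqrt by (apply Rdiv_le_0_compat; [apply Rlt_le, exp_pos | lra]).
    replace (exp 2 / lyap T * exp (- 2 * t)) with (exp 2 * exp (- 2 * t) / lyap T)
      by (field; lra).
    apply (Rle_div_r (w t * w t)); [lra | nra].
  - apply Rmult_le_pos; [apply sqrt_pos | apply Rlt_le, exp_pos].
Qed.

Lemma w_exp_decay (M : R) : 1 <= M -> exists K : R, forall T : R, Rbar_lt S T -> - M <= y T ->
  (forall t, T <= t -> y t / w t <= - K) ->
  exists B, 0 <= B /\ forall t, T <= t -> w t <= B * exp (- t).
Proof.
  intros HM; pose proof k_bounds.
  assert (Hc : 0 < 2 * lam * k * exp 2)
    by (pose proof (exp_pos 2); apply Rmult_lt_0_compat; [nra | lra]).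
  set (eps := Rmin 1 (exp (- k * (1 + M)) / (2 * lam * k * exp 2))).
  assert (Heps : 0 < eps <= 1 /\ 2 * lam * k * exp 2 * eps <= exp (- k * (1 + M))).
  { pose proof (exp_pos (- k * (1 + M))).
    repeat split; [apply Rmin_glb_lt; [lra | apply Rdiv_lt_0_compat; lra] | apply Rmin_l |].
    rewrite Rmult_comm; apply Rle_div_r; [lra | apply Rmin_r]. }
  clearbody eps.
  (* This K forces w T <= eps, the smallness needed by [trapped_after] and [lyap_pos]. *)
  exists (2 * lam + M / eps); intros T HT HyT Hz.
  assert (HMe : 0 <= M / eps) by (apply Rdiv_le_0_compat; lra).
  assert (Hy : forall t, T <= t -> y t <= - (2 * lam + M / eps) * w t).
  { intros t Ht; apply Rle_div_l; [| apply Hz, Ht].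
    apply Rlt_gt, w_gt0, (Rbar_lt_Rle_trans S T t HT Ht). }
  pose proof (w_gt0 T HT) as HwT0; pose proof (Hy T (Rle_refl T)).
  assert (HwT : w T <= eps).
  { apply Rmult_le_reg_l with (M / eps); [apply Rdiv_lt_0_compat; lra |].
    replace (M / eps * eps) with M by (field; lra).
    nra. }
  assert (Hz2 : forall t, T <= t -> y t / w t <= - 2 * lam)
    by (intros t Ht; specialize (Hz t Ht); lra).
  pose proof (trapped_after T HT ltac:(lra) Hz2) as Htrap.
  assert (Hxy : forall s, T <= s -> x s < 1 / 2 /\ y s < 0)
    by (intros s Hs; split; [exact (x_lt_half T HT Htrap s Hs) | apply Htrap, Hs]).
  assert (HL : 0 < lyap T).
  { apply (lyap_pos T M HT HyT).
    apply Rle_trans with (2 * lam * k * exp 2 * eps); [| apply Heps].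
    apply Rmult_le_compat_l; [lra | nra]. }
  exists (sqrt (exp 2 / lyap T)); split; [apply sqrt_pos |].
  intros t Ht; apply w_le_exp_of_lyap; assumption.
Qed.

End Solution.

Theorem lemma3p8 (n : nat) (lam : R) (S : Rbar) (w x y : R -> R) :
  (2 <= n)%nat -> 0 < lam ->
  maximal_sol n lam S w x y ->
  (forall t : R, Rbar_lt S t -> 0 < w t) ->
  (forall t0 : R, Rbar_lt S t0 -> integral_diverges w t0) ->
  (forall t : R, Rbar_lt S t -> -1 < x t < 1) ->
  is_lim y p_infty m_infty.
Proof.
  intros Hn Hlam Hmax Hw Hdiv Hx.
  destruct (maximal_sol_nonempty n lam S w x y) as [t0 Ht0]; [lia | exact Hlam | exact Hmax |].
  destruct Hmax as [Hsol _].
  apply is_lim_spec; intros M; simpl.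
  destruct (w_exp_decay n lam S w x y Hn Hlam Hsol Hw Hx (Rmax 1 (- M)) (Rmax_l 1 (- M)))
    as [K HK].
  destruct (y_div_w_eventually_le n lam S w x y Hlam Hsol Hw (- K) t0 Ht0 (Hdiv t0 Ht0))
    as (T & HT & Hz).
  exists T; intros t Ht.
  apply Rnot_le_lt; intro HMt.
  pose proof (Rbar_lt_Rle_trans S T t HT (Rlt_le _ _ Ht)) as HSt.
  destruct (HK t HSt) as (B & HB & Hwb).
  - pose proof (Rmax_r 1 (- M)); lra.
  - intros s Hs; apply Hz; lra.
  - destruct (Hdiv t HSt (B * exp (- t))) as (t' & Htt' & HI).
    pose proof (RInt_le_of_exp_bound w S t t' B (continuous_w n lam S w x y Hsol) HSt Htt' HB Hwb).
    lra.
Qed.
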